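(* Let $d>0$ and let $\tilde V\in C^1([-\tfrac d2,\tfrac d2])$ be even. Let $\tilde\lambda_1<\tilde\lambda_2$ be the first two eigenvalues and $\tilde\phi_1>0$ the first eigenfunction of $-\tilde u''+\tilde V\tilde u=\tilde\lambda\tilde u$ on $(-\tfrac d2,\tfrac d2)$, $\tilde u(\pm\tfrac d2)=0$. Set $\tilde\alpha:=-\sup_{\tau\in(-\frac d2,\frac d2)}(\log\tilde\phi_1)''(\tau)$. Then for every $s\in(0,1)$, $$\tilde\lambda_2-\tilde\lambda_1\ \ge\ 4s(1-s)\frac{\pi^2}{d^2}+2s\tilde\alpha,$$ and $$\tilde\lambda_2\ \ge\ (1+2s)\tilde\lambda_1+4s(1-s)\frac{\pi^2}{d^2}+2s\inf_{(-\frac d2,\frac d2)}\Big[\big(\tilde\phi_1'/\tilde\phi_1\big)^2-\tilde V\Big].$$ *)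

From Stdlib Require Import Reals.
Open Scope R_scope.

Definition in_open (d x : R) : Prop := - (d / 2) < x < d / 2.
Definition in_closed (d x : R) : Prop := - (d / 2) <= x <= d / 2.

Definition is_lower_bound (E : R -> Prop) (m : R) : Prop := forall x, E x -> m <= x.
Definition is_glb (E : R -> Prop) (m : R) : Prop :=
  is_lower_bound E m /\ (forall b, is_lower_bound E b -> b <= m).

Definition Dirichlet_eigenfunction (d : R) (V : R -> R) (lam : R)
    (u u' u'' : R -> R) : Prop :=
  (forall x, in_open d x ->
     derivable_pt_lim u x (u' x) /\ derivable_pt_lim u' x (u'' x) /\
     - u'' x + V x * u x = lam * u x) /\
  (forall x, in_closed d x -> limit1_in u (in_closed d) (u x) x) /\
  u (- (d / 2)) = 0 /\ u (d / 2) = 0 /\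
  (exists x, in_open d x /\ u x <> 0).

Definition Dirichlet_eigenvalue (d : R) (V : R -> R) (lam : R) : Prop :=
  exists u u' u'', Dirichlet_eigenfunction d V lam u u' u''.

From Stdlib Require Import Reals Lra Psatz Classical.
Open Scope R_scope.

(* Let u be an eigenfunction for lam2. The Wronskian y = phi u' - phi' u satisfies
   y' = (lam1 - lam2) phi u, so it does not vanish identically; let (p, q) be a maximal
   interval on which y <> 0. There F = ln |y| - 2 s ln phi tends to -oo at both ends: at an
   interior zero of y because phi > 0 there, and at the boundary because |y| = O(r^3) while
   phi >= k r by a Hopf-type estimate (r is the distance to the boundary). By completing a
   square, G = F' satisfies the Riccati inequality
     G' >= - 2 s sup (ln phi)'' - (lam2 - lam1) - G^2 / (4 s (1 - s)),
   while G runs from +oo to -oo on (p, q). The Pruefer angle atan (G / (4 s (1 - s) om)) then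
   forces q - p >= pi / om for every om > 0 with
     4 s (1 - s) om^2 >= 2 s sup (ln phi)'' + lam2 - lam1,
   which gives the first inequality since q - p <= d. The second follows from
   (ln phi)'' = V - lam1 - (phi' / phi)^2. *)

(** * Real-analysis preliminaries *)

Lemma derivable_pt_lim_continuity_pt f x l :
  derivable_pt_lim f x l -> continuity_pt f x.
Proof. intro H; exact (derivable_continuous_pt f x (exist _ l H)). Qed.

Lemma derivable_pt_lim_reflect f x l :
  derivable_pt_lim f (- x) l -> derivable_pt_lim (fun t => f (- t)) x (- l).
Proof. intro H; apply derivable_pt_lim_mirr_fwd; rewrite !Ropp_involutive; exact H. Qed.

Lemma continuity_pt_reflect f x :
  continuity_pt f (- x) -> continuity_pt (fun t => f (- t)) x.
Proof.
  intro H; apply (continuity_pt_comp (fun t => - t) f); [|exact H].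
  apply continuity_pt_opp, derivable_continuous_pt, derivable_pt_id.
Qed.

Lemma continuity_pt_ball f x eps :
  continuity_pt f x -> 0 < eps ->
  exists del, 0 < del /\ forall t, Rabs (t - x) < del -> Rabs (f t - f x) < eps.
Proof.
  intros H Heps; destruct (H eps Heps) as [del [Hdel Hf]].
  exists del; split; [exact Hdel|]; intros t Ht.
  destruct (Req_dec t x) as [->|Htx]; [rewrite Rminus_diag, Rabs_R0; exact Heps|].
  apply (Hf t); repeat split; auto.
Qed.

Lemma Rabs_diff_le_of_deriv_bound f f' u v B :
  u < v -> (forall c, u <= c <= v -> derivable_pt_lim f c (f' c)) ->
  (forall c, u < c < v -> Rabs (f' c) <= B) -> Rabs (f v - f u) <= B * (v - u).
Proof.
  intros Huv Hf Hb; destruct (MVT_cor2 f f' u v Huv Hf) as [c [-> Hc]].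
  rewrite Rabs_mult, (Rabs_right (v - u)) by lra.
  apply Rmult_le_compat_r; [lra | exact (Hb c Hc)].
Qed.

Lemma ln_le_compat x y : 0 < x -> x <= y -> ln x <= ln y.
Proof. intros Hx [Hxy|<-]; [left; apply ln_increasing|]; lra. Qed.

Lemma exp_le_compat x y : x <= y -> exp x <= exp y.
Proof. intros [Hxy|<-]; [left; apply exp_increasing, Hxy | lra]. Qed.

Lemma derivable_pt_lim_exp_scal k x :
  derivable_pt_lim (fun t => exp (k * t)) x (exp (k * x) * k).
Proof.
  apply (derivable_pt_lim_comp (fun t => k * t) exp x k).
  - pose proof (derivable_pt_lim_scal id k x 1 (derivable_pt_lim_id x)) as H.
    rewrite Rmult_1_r in H; exact H.
  - apply derivable_pt_lim_exp.
Qed.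

Lemma exists_pos_below a b c e : 0 < a -> 0 < b -> 0 < c -> 0 < e ->
  exists r, 0 < r /\ r < a /\ r < b /\ r < c /\ r < e.
Proof.
  intros; exists (Rmin (Rmin a b) (Rmin c e) / 2).
  pose proof (Rmin_l a b); pose proof (Rmin_r a b).
  pose proof (Rmin_l c e); pose proof (Rmin_r c e).
  pose proof (Rmin_l (Rmin a b) (Rmin c e)); pose proof (Rmin_r (Rmin a b) (Rmin c e)).
  assert (0 < Rmin (Rmin a b) (Rmin c e)) by (repeat apply Rmin_pos; auto).
  lra.
Qed.

Lemma exists_nonzero_of_deriv_nonzero (y : R -> R) l x a b :
  a < x < b -> derivable_pt_lim y x l -> l <> 0 -> exists x0, a < x0 < b /\ y x0 <> 0.
Proof.
  intros Hx Hy Hl; apply NNPP; intro Hzero.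
  assert (Hz : forall t, a < t < b -> y t = 0).
  { intros t Ht; apply NNPP; intro; apply Hzero; exists t; auto. }
  destruct (Hy (Rabs l) (Rabs_pos_lt _ Hl)) as [del Hdel].
  set (h := Rmin del (b - x) / 2).
  assert (0 < Rmin del (b - x)) by (apply Rmin_pos; [apply cond_pos | lra]).
  assert (Hh : 0 < h < b - x /\ h < del)
    by (pose proof (Rmin_l del (b - x)); pose proof (Rmin_r del (b - x)); unfold h; lra).
  specialize (Hdel h ltac:(lra) ltac:(rewrite Rabs_right; lra)).
  rewrite (Hz (x + h)), (Hz x) in Hdel by lra.
  replace ((0 - 0) / h - l) with (- l) in Hdel by (field; lra).
  rewrite Rabs_Ropp in Hdel; lra.
Qed.

Lemma continuous_nonvanishing_sign (g : R -> R) a b :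
  (forall x, a < x < b -> continuity_pt g x /\ g x <> 0) ->
  (forall x, a < x < b -> 0 < g x) \/ (forall x, a < x < b -> g x < 0).
Proof.
  intro Hg; apply NNPP; intro Hmixed; apply not_or_and in Hmixed as [Hnpos Hnneg].
  apply not_all_ex_not in Hnpos as [x1 Hx1]; apply imply_to_and in Hx1 as [Hx1 Hg1].
  apply not_all_ex_not in Hnneg as [x2 Hx2]; apply imply_to_and in Hx2 as [Hx2 Hg2].
  destruct (Hg x1 Hx1) as [_ Hz1]; destruct (Hg x2 Hx2) as [_ Hz2].
  destruct (Rle_or_lt x1 x2) as [H12|H21].
  - assert (x1 <> x2) by (intros ->; lra).
    destruct (Ranalysis5.IVT_interv g x1 x2) as [z [Hz Hgz]];
      [intros c Hc; apply Hg; lra | lra | lra | lra |].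
    apply (Hg z ltac:(lra)); exact Hgz.
  - destruct (Ranalysis5.IVT_interv (fun x => - g x) x2 x1) as [z [Hz Hgz]];
      [intros c Hc; apply continuity_pt_opp, Hg; lra | lra | lra | lra |].
    apply (Hg z ltac:(lra)); lra.
Qed.

Lemma last_zero_before (y : R -> R) a x0 :
  a < x0 -> (forall t, a < t <= x0 -> continuity_pt y t) -> y x0 <> 0 ->
  exists p, a <= p < x0 /\ (p = a \/ y p = 0) /\ forall t, p < t <= x0 -> y t <> 0.
Proof.
  intros Hax Hy Hy0.
  set (Z := fun t => a <= t <= x0 /\ (t = a \/ y t = 0)).
  destruct (completeness Z) as [p [Hub Hlub]];
    [exists x0; intros t [Ht _]; lra | exists a; split; [lra | auto] |].
  assert (Hap : a <= p) by (apply Hub; split; [lra | auto]).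
  assert (Hpx : p <= x0) by (apply Hlub; intros t [Ht _]; lra).
  assert (Hafter : forall t, p < t <= x0 -> y t <> 0).
  { intros t Ht Hyt; assert (t <= p) by (apply Hub; split; [lra | auto]); lra. }
  assert (Hp : p = a \/ y p = 0).
  { destruct (Req_dec p a) as [|Hpa]; [now left | right].
    apply NNPP; intro Hyp.
    destruct (continuity_pt_ball y p (Rabs (y p))) as [del [Hdel Hball]];
      [apply Hy; lra | apply Rabs_pos_lt, Hyp |].
    (* [p] is a limit of zeros of [y] from the left *)
    assert (Hnear : exists t, Z t /\ p - Rmin del (p - a) < t).
    { apply NNPP; intro Hn.
      assert (p <= p - Rmin del (p - a)); [|pose proof (Rmin_pos del (p - a)); lra].
      apply Hlub; intros t Ht; apply Rnot_lt_le; intro; apply Hn; exists t; auto. }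
    destruct Hnear as [t [[Ht [->|Hyt]] Hpt]];
      pose proof (Rmin_l del (p - a)); pose proof (Rmin_r del (p - a)); [lra|].
    assert (t <= p) by (apply Hub; split; auto).
    specialize (Hball t ltac:(rewrite Rabs_left1 by lra; lra)).
    rewrite Hyt, Rminus_0_l, Rabs_Ropp in Hball; lra. }
  exists p; split; [split; [exact Hap|] | split; [exact Hp | exact Hafter]].
  destruct (Req_dec p x0) as [->|]; [|lra].
  destruct Hp as [->|Hp]; [lra | contradiction].
Qed.

Lemma nonvanishing_interval (y : R -> R) a b x0 :
  a < x0 < b -> (forall t, a < t < b -> continuity_pt y t) -> y x0 <> 0 ->
  exists p q, a <= p < x0 /\ x0 < q <= b /\ (p = a \/ y p = 0) /\ (q = b \/ y q = 0) /\
    forall t, p < t < q -> y t <> 0.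
Proof.
  intros Hx0 Hy Hy0.
  destruct (last_zero_before y a x0) as [p [Hp [Hpz Hpy]]];
    [lra | intros; apply Hy; lra | exact Hy0 |].
  destruct (last_zero_before (fun t => y (- t)) (- b) (- x0)) as [q [Hq [Hqz Hqy]]];
    [lra | intros t Ht; apply continuity_pt_reflect, Hy; lra
    | rewrite Ropp_involutive; exact Hy0 |].
  exists p, (- q); split; [lra|]; split; [lra|]; split; [exact Hpz|]; split.
  - destruct Hqz as [->|Hqz]; [left; ring | right; exact Hqz].
  - intros t Ht; destruct (Rle_or_lt t x0); [apply Hpy; lra|].
    rewrite <- (Ropp_involutive t); apply Hqy; lra.
Qed.

Lemma le_exp_of_deriv_le (E E' : R -> R) K x y :
  x <= y -> (forall t, x <= t <= y -> derivable_pt_lim E t (E' t) /\ E' t <= K * E t) ->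
  E y <= E x * exp (K * (y - x)).
Proof.
  intros Hxy HE; destruct (Req_dec x y) as [<-|Hne].
  { rewrite Rminus_diag, Rmult_0_r, exp_0; lra. }
  set (G' := fun t => E' t * exp (- K * t) + E t * (exp (- K * t) * - K)).
  destruct (MVT_cor2 (fun t => E t * exp (- K * t)) G' x y) as [c [Hc Hcxy]]; [lra| |].
  { intros c Hc; apply (derivable_pt_lim_mult E (fun t => exp (- K * t)));
      [apply HE; lra | apply derivable_pt_lim_exp_scal]. }
  assert (HG' : G' c <= 0).
  { destruct (HE c ltac:(lra)) as [_ Hc']; pose proof (exp_pos (- K * c)); unfold G'; nra. }
  assert (Hdecr : E y * exp (- K * y) <= E x * exp (- K * x)) by nra.
  replace (E x * exp (K * (y - x))) with (E x * exp (- K * x) * exp (K * y))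
    by (rewrite Rmult_assoc, <- exp_plus; do 2 f_equal; ring).
  replace (E y) with (E y * exp (- K * y) * exp (K * y))
    by (rewrite Rmult_assoc, <- exp_plus; replace (- K * y + K * y) with 0 by ring;
        rewrite exp_0; ring).
  apply Rmult_le_compat_r; [left; apply exp_pos | exact Hdecr].
Qed.

Lemma comparable_of_log_deriv_bound (E E' : R -> R) K a b :
  0 <= K ->
  (forall t, a < t < b ->
     derivable_pt_lim E t (E' t) /\ Rabs (E' t) <= K * E t /\ 0 <= E t) ->
  forall x y, a < x < b -> a < y < b -> E x <= E y * exp (K * (b - a)).
Proof.
  intros HK HE x y Hx Hy.
  assert (Hgrow : exp (K * Rabs (x - y)) <= exp (K * (b - a))).
  { apply exp_le_compat, Rmult_le_compat_l; [exact HK | apply Rabs_le; lra]. }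
  assert (HEy : 0 <= E y) by apply HE, Hy.
  enough (E x <= E y * exp (K * Rabs (x - y))) by (pose proof (exp_pos (K * Rabs (x - y))); nra).
  destruct (Rle_or_lt y x) as [Hyx|Hxy].
  - rewrite Rabs_right by lra.
    apply (le_exp_of_deriv_le E E' K y x Hyx); intros t Ht.
    destruct (HE t ltac:(lra)) as [HE1 [HE2 _]]; split; [exact HE1|].
    pose proof (Rle_abs (E' t)); lra.
  - rewrite Rabs_left, Ropp_minus_distr by lra.
    pose proof (le_exp_of_deriv_le (fun t => E (- t)) (fun t => - E' (- t)) K (- y) (- x))
      as Hrefl.
    cbv beta in Hrefl; rewrite !Ropp_involutive in Hrefl; replace (y - x) with (- x - - y) by ring.
    apply Hrefl; [lra|]; intros t Ht.
    destruct (HE (- t) ltac:(lra)) as [HE1 [HE2 _]]; split.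
    + apply derivable_pt_lim_reflect; exact HE1.
    + pose proof (Rle_abs (- E' (- t))); rewrite Rabs_Ropp in *; lra.
Qed.

Definition vanishes_at_right (f : R -> R) (a : R) : Prop :=
  forall eps, 0 < eps -> exists del, 0 < del /\ forall x, a < x < a + del -> Rabs (f x) < eps.

Lemma abs_le_of_vanishes_at_right (y y' g : R -> R) a b :
  vanishes_at_right y a ->
  (forall x, a < x < b -> derivable_pt_lim y x (y' x)) ->
  (forall z x, a < z < x -> x < b -> Rabs (y' z) <= g x) ->
  forall x, a < x < b -> Rabs (y x) <= g x * (x - a).
Proof.
  intros Hy0 Hy Hg x Hx.
  assert (Hgx : 0 <= g x).
  { pose proof (Hg ((a + x) / 2) x ltac:(lra) ltac:(lra)); pose proof (Rabs_pos (y' ((a + x) / 2))).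
    lra. }
  apply Rle_plus_epsilon; intros e He; destruct (Hy0 e He) as [del [Hdel Hsmall]].
  set (t := a + Rmin del (x - a) / 2).
  pose proof (Rmin_l del (x - a)); pose proof (Rmin_r del (x - a)).
  assert (0 < Rmin del (x - a)) by (apply Rmin_pos; lra).
  assert (Hyt : Rabs (y t) < e) by (apply Hsmall; unfold t; lra).
  assert (Hdiff : Rabs (y x - y t) <= g x * (x - t)).
  { apply (Rabs_diff_le_of_deriv_bound y y'); unfold t; [lra | intros; apply Hy; lra |].
    intros c Hc; apply Hg; lra. }
  assert (g x * (x - t) <= g x * (x - a)) by (apply Rmult_le_compat_l; unfold t; lra).
  pose proof (Rabs_triang (y x - y t) (y t)); replace (y x - y t + y t) with (y x) in * by ring.
  lra.
Qed.

Lemma vanishes_at_right_of_linear_bound (y : R -> R) a b D :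
  a < b -> (forall x, a < x < b -> Rabs (y x) <= D * (x - a)) -> vanishes_at_right y a.
Proof.
  intros Hab Hy e He; set (D' := Rabs D + 1).
  assert (HD' : 0 < D') by (pose proof (Rabs_pos D); unfold D'; lra).
  exists (Rmin (b - a) (e / D')); split; [apply Rmin_pos; [lra | apply Rdiv_lt_0_compat; lra]|].
  intros x Hx; pose proof (Rmin_l (b - a) (e / D')); pose proof (Rmin_r (b - a) (e / D')).
  assert (D' * (x - a) < D' * (e / D')) by (apply Rmult_lt_compat_l; lra).
  replace (D' * (e / D')) with e in * by (field; lra).
  pose proof (Hy x ltac:(lra)); pose proof (Rle_abs D); unfold D' in *; nra.
Qed.

Lemma abs_le_of_sq_le x c : x ^ 2 <= c -> Rabs x <= c + 1.
Proof.
  intro H; rewrite <- (pow2_abs x) in H; pose proof (Rabs_pos x).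
  destruct (Rle_or_lt (Rabs x) 1); nra.
Qed.

Lemma positive_vanishing_not_decreasing (f f' : R -> R) a c B :
  a < c ->
  (forall x, a < x < c -> derivable_pt_lim f x (f' x) /\ f' x < 0 /\ 0 < f x <= B * (x - a)) ->
  False.
Proof.
  intros Hac Hf; set (x := (a + c) / 2).
  assert (Hx : a < x < c) by (unfold x; lra).
  assert (Hfx : 0 < f x) by apply Hf, Hx.
  assert (HB : 0 < B) by (destruct (Hf x Hx) as [_ [_ H]]; nra).
  set (t := a + Rmin (x - a) (f x / B) / 2).
  pose proof (Rmin_l (x - a) (f x / B)); pose proof (Rmin_r (x - a) (f x / B)).
  assert (0 < Rmin (x - a) (f x / B)) by (apply Rmin_pos; [lra | apply Rdiv_lt_0_compat; lra]).
  assert (HfB : B * (f x / B) = f x) by (field; lra).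
  assert (Ht : a < t < x) by (unfold t; lra).
  destruct (MVT_cor2 f f' t x) as [c' [Hc Hct]]; [lra | intros z Hz; apply Hf; lra |].
  assert (f' c' * (x - t) < 0) by (apply Rmult_neg_pos; [apply Hf|]; lra).
  assert (B * (t - a) <= B * (f x / B)) by (apply Rmult_le_compat_l; unfold t; lra).
  destruct (Hf t ltac:(lra)) as [_ [_ Hft]]; lra.
Qed.

Lemma linear_lower_bound_at_left (f f' : R -> R) a b B e0 :
  a < b -> 0 < e0 ->
  (forall x, a < x < b -> derivable_pt_lim f x (f' x) /\ continuity_pt f' x) ->
  (forall x, a < x < b -> 0 < f x <= B * (x - a)) ->
  (forall x, a < x < b -> e0 <= f x ^ 2 + f' x ^ 2) ->
  exists del k, 0 < del /\ 0 < k /\ forall x, a < x < a + del -> k * (x - a) <= f x.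
Proof.
  (* near a, f is small while f^2 + f'^2 is not, so |f'| >= k there *)
  intros Hab He0 Hf Hpos He.
  assert (HB : 0 < B) by (pose proof (Hpos ((a + b) / 2) ltac:(lra)); nra).
  set (k := sqrt (e0 / 2)).
  assert (Hk : 0 < k) by (apply sqrt_lt_R0; lra).
  assert (Hkk : k * k = e0 / 2) by (apply sqrt_sqrt; lra).
  set (del := Rmin ((b - a) / 2) (k / B)).
  assert (Hdel1 : del <= (b - a) / 2) by apply Rmin_l.
  assert (Hdel2 : del <= k / B) by apply Rmin_r.
  assert (Hdel : 0 < del) by (apply Rmin_pos; [lra | apply Rdiv_lt_0_compat; lra]).
  assert (HkB : B * (k / B) = k) by (field; lra).
  assert (Hsteep : forall x, a < x < a + del -> k * k < f' x * f' x).
  { intros x Hx; pose proof (Hpos x ltac:(lra)); pose proof (He x ltac:(lra)).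
    assert (B * (x - a) < B * (k / B)) by (apply Rmult_lt_compat_l; lra); nra. }
  destruct (continuous_nonvanishing_sign f' a (a + del)) as [Hincr|Hdecr].
  { intros x Hx; split; [apply Hf; lra|]; intro Hz; pose proof (Hsteep x Hx); nra. }
  - exists del, k; split; [exact Hdel|]; split; [exact Hk|]; intros x Hx.
    apply Rle_plus_epsilon; intros e He'.
    set (t := a + Rmin (x - a) (e / k) / 2).
    pose proof (Rmin_l (x - a) (e / k)); pose proof (Rmin_r (x - a) (e / k)).
    assert (0 < Rmin (x - a) (e / k)) by (apply Rmin_pos; [lra | apply Rdiv_lt_0_compat; lra]).
    assert (Hke : k * (e / k) = e) by (field; lra).
    assert (Ht : a < t < x) by (unfold t; lra).
    destruct (MVT_cor2 f f' t x) as [c [Hc Hct]]; [lra | intros c Hc; apply Hf; lra |].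
    assert (k < f' c) by (pose proof (Hincr c ltac:(lra)); pose proof (Hsteep c ltac:(lra)); nra).
    assert (k * (x - t) <= f' c * (x - t)) by (apply Rmult_le_compat_r; lra).
    assert (k * (t - a) <= k * (e / k)) by (apply Rmult_le_compat_l; unfold t; lra).
    pose proof (Hpos t ltac:(lra)); lra.
  - exfalso; apply (positive_vanishing_not_decreasing f f' a (a + del) B); [lra|].
    intros x Hx; split; [apply Hf; lra | split; [apply Hdecr, Hx | apply Hpos; lra]].
Qed.

(** * A Riccati comparison on an interval *)

Definition unbounded_below_on (F : R -> R) (a b : R) : Prop :=
  forall N, exists x, a < x < b /\ F x < N.

Lemma unbounded_below_on_reflect F a b :
  unbounded_below_on (fun t => F (- t)) (- b) (- a) <-> unbounded_below_on F a b.
Proof.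
  split; intros H N; destruct (H N) as [x [Hx HF]]; exists (- x); split; try lra;
    cbv beta; rewrite ?Ropp_involutive; exact HF.
Qed.

Lemma unbounded_below_on_ext (F G : R -> R) a b :
  (forall t, F t = G t) -> unbounded_below_on F a b -> unbounded_below_on G a b.
Proof. intros HFG HF N; destruct (HF N) as [x [Hx HFx]]; exists x; rewrite <- HFG; auto. Qed.

Lemma deriv_unbounded_above_near_left (F G : R -> R) p x0 :
  p < x0 -> (forall x, p < x <= x0 -> derivable_pt_lim F x (G x)) ->
  unbounded_below_on F p x0 -> forall K, exists x, p < x < x0 /\ K < G x.
Proof.
  intros Hpx HF Hunb K; set (K' := Rabs K + 1).
  assert (HK : K < K') by (pose proof (Rle_abs K); unfold K'; lra).
  assert (HK0 : 0 < K') by (pose proof (Rabs_pos K); unfold K'; lra).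
  destruct (Hunb (F x0 - K' * (x0 - p))) as [x [Hx HFx]].
  destruct (MVT_cor2 F G x x0) as [c [Hc Hcx]]; [lra | intros c Hc; apply HF; lra |].
  exists c; split; [lra|].
  assert (K' * (x0 - x) < G c * (x0 - x)).
  { assert (K' * (x0 - x) <= K' * (x0 - p)) by (apply Rmult_le_compat_l; lra); lra. }
  apply Rmult_lt_reg_r in H; lra.
Qed.

Lemma deriv_unbounded_below_near_right (F G : R -> R) x0 q :
  x0 < q -> (forall x, x0 <= x < q -> derivable_pt_lim F x (G x)) ->
  unbounded_below_on F x0 q -> forall K, exists x, x0 < x < q /\ G x < K.
Proof.
  intros Hxq HF Hunb K.
  destruct (deriv_unbounded_above_near_left (fun t => F (- t)) (fun t => - G (- t)) (- q) (- x0))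
    with (K := - K) as [x [Hx HG]]; [lra | | |].
  - intros x Hx; apply derivable_pt_lim_reflect, HF; lra.
  - apply (unbounded_below_on_reflect F); exact Hunb.
  - exists (- x); split; lra.
Qed.

Lemma atan_close_to_half_pi eta : 0 < eta -> exists K, 0 < K /\ PI / 2 - eta < atan K.
Proof.
  intro Heta; set (e := Rmin (eta / 2) 1).
  assert (He : 0 < e) by (apply Rmin_pos; lra).
  assert (e <= eta / 2) by apply Rmin_l; assert (e <= 1) by apply Rmin_r.
  pose proof PI2_3_2.
  assert (Htan : 0 < tan e) by (apply tan_gt_0; lra).
  exists (/ tan e); split; [apply Rinv_0_lt_compat, Htan|].
  rewrite atan_inv, atan_tan by (auto; lra); lra.
Qed.

Lemma prufer_angle_deriv_lower eps om r r' :
  0 < eps -> 0 < om -> - (eps * om ^ 2) - r ^ 2 / eps <= r' ->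
  - om <= r' / (eps * om) / (1 + (r / (eps * om)) ^ 2).
Proof.
  intros Heps Hom Hr'; set (w := eps * om).
  assert (Hw : 0 < w) by (unfold w; nra).
  replace (r' / w / (1 + (r / w) ^ 2)) with (r' * w / (w ^ 2 + r ^ 2)) by (field; nra).
  apply Rmult_le_reg_r with (w ^ 2 + r ^ 2); [nra|].
  unfold Rdiv; rewrite Rmult_assoc, Rinv_l, Rmult_1_r by nra.
  assert (r' * eps >= - (eps * om) ^ 2 - r ^ 2).
  { apply Rmult_le_compat_r with (r := eps) in Hr'; [|lra].
    replace ((- (eps * om ^ 2) - r ^ 2 / eps) * eps) with (- (eps * om) ^ 2 - r ^ 2) in Hr'
      by (field; lra); lra. }
  unfold w; nra.
Qed.

Lemma prufer_angle_bound (G G' : R -> R) p x0 q eps om :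
  0 < eps -> 0 < om -> p < x0 < q ->
  (forall x, p < x < q ->
     derivable_pt_lim G x (G' x) /\ - (eps * om ^ 2) - G x ^ 2 / eps <= G' x) ->
  (forall K, exists x, p < x < x0 /\ K < G x) ->
  (forall K, exists x, x0 < x < q /\ G x < K) ->
  PI <= om * (q - p).
Proof.
  intros Heps Hom Hx0 HG Hleft Hright.
  assert (Hw : 0 < eps * om) by nra.
  set (theta := fun t => atan (G t / (eps * om))).
  set (theta' := fun t => G' t / (eps * om) / (1 + (G t / (eps * om)) ^ 2)).
  assert (Htheta : forall x, p < x < q -> derivable_pt_lim theta x (theta' x)).
  { intros x Hx; destruct (HG x Hx) as [HGx _].
    apply (derivable_pt_lim_ext (comp atan (fun t => / (eps * om) * G t)));
      [intro t; unfold comp, theta; f_equal; field; lra|].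
    replace (theta' x) with (/ (1 + (/ (eps * om) * G x) ^ 2) * (/ (eps * om) * G' x))
      by (unfold theta'; field; split; [pose proof (pow2_ge_0 (G x / (eps * om))) | ]; nra).
    apply derivable_pt_lim_comp; [apply derivable_pt_lim_scal, HGx | apply derivable_pt_lim_atan]. }
  apply Rle_plus_epsilon; intros e He.
  destruct (atan_close_to_half_pi (e / 2)) as [K [HK HatanK]]; [lra|].
  destruct (Hleft (eps * om * K)) as [x1 [Hx1 HG1]].
  destruct (Hright (- (eps * om * K))) as [x2 [Hx2 HG2]].
  assert (Htheta1 : atan K < theta x1).
  { apply atan_increasing; apply Rmult_lt_reg_l with (eps * om); [exact Hw|].
    field_simplify; lra. }
  assert (Htheta2 : theta x2 < - atan K).
  { rewrite <- atan_opp; apply atan_increasing; apply Rmult_lt_reg_l with (eps * om); [exact Hw|].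
    field_simplify; lra. }
  destruct (MVT_cor2 theta theta' x1 x2) as [c [Hc Hcx]]; [lra | intros c Hc; apply Htheta; lra |].
  assert (Hc' : - om <= theta' c) by (apply prufer_angle_deriv_lower; auto; apply HG; lra).
  assert (- om * (x2 - x1) <= theta' c * (x2 - x1)) by (apply Rmult_le_compat_r; lra).
  assert (om * (x2 - x1) <= om * (q - p)) by (apply Rmult_le_compat_l; lra).
  lra.
Qed.

Lemma riccati_bound (F G G' : R -> R) p x0 q eps c :
  0 < eps -> p < x0 < q ->
  (forall x, p < x < q -> derivable_pt_lim F x (G x) /\
     derivable_pt_lim G x (G' x) /\ c - G x ^ 2 / eps <= G' x) ->
  unbounded_below_on F p x0 -> unbounded_below_on F x0 q ->
  eps * (PI / (q - p)) ^ 2 <= - c.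
Proof.
  intros Heps Hx0 HFG Hleft Hright.
  set (P := PI / (q - p)).
  assert (HP : 0 < P) by (apply Rdiv_lt_0_compat; [apply PI_RGT_0 | lra]).
  assert (HPd : P * (q - p) = PI) by (unfold P; field; lra).
  apply Rnot_lt_le; intro Hlt.
  (* [om] lies in [sqrt (max 0 (- c / eps)), P) since (1 + r) / 2 >= sqrt r *)
  set (r := Rmax 0 (- c / (eps * P ^ 2))).
  assert (Hr0 : 0 <= r) by apply Rmax_l.
  assert (Hrc : - c / (eps * P ^ 2) <= r) by apply Rmax_r.
  assert (HePP : 0 < eps * P ^ 2) by (apply Rmult_lt_0_compat; [lra | apply pow_lt; lra]).
  assert (Hr1 : r < 1).
  { unfold r, Rmax; destruct (Rle_dec 0 (- c / (eps * P ^ 2))); [|lra].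
    apply Rmult_lt_reg_r with (eps * P ^ 2); [exact HePP|].
    unfold Rdiv; rewrite Rmult_assoc, Rinv_l, Rmult_1_r; lra. }
  set (om := P * (1 + r) / 2).
  assert (Hom : 0 < om) by (unfold om; nra).
  assert (Hom_c : - c <= eps * om ^ 2).
  { assert (- c <= eps * P ^ 2 * r).
    { apply Rmult_le_compat_l with (r := eps * P ^ 2) in Hrc; [|lra].
      unfold Rdiv in Hrc; rewrite <- Rmult_assoc, (Rmult_comm _ (- c)), Rmult_assoc, Rinv_r,
        Rmult_1_r in Hrc by lra; lra. }
    assert (r <= ((1 + r) / 2) ^ 2) by nra.
    unfold om; replace ((P * (1 + r) / 2) ^ 2) with (P ^ 2 * ((1 + r) / 2) ^ 2) by field; nra. }
  assert (Hangle : PI <= om * (q - p)).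
  { apply (prufer_angle_bound G G' p x0 q eps om Heps Hom Hx0).
    - intros x Hx; destruct (HFG x Hx) as [_ [HG HG']]; split; [exact HG | lra].
    - apply (deriv_unbounded_above_near_left F G p x0); [lra | intros; apply HFG; lra |].
      exact Hleft.
    - apply (deriv_unbounded_below_near_right F G x0 q); [lra | intros; apply HFG; lra |].
      exact Hright. }
  assert (om * (q - p) < P * (q - p)) by (apply Rmult_lt_compat_r; unfold om; nra).
  lra.
Qed.

(* ln (|y| / phi ^ (2 s)), written without real powers *)
Definition log_quotient (s : R) (y phi : R -> R) (t : R) : R :=
  ln (y t ^ 2) / 2 - 2 * s * ln (phi t).

Lemma log_quotient_le s y phi t w :
  0 < s < 1 -> y t <> 0 -> 0 < w <= phi t -> w <= 1 ->
  log_quotient s y phi t <= ln (Rabs (y t)) - 2 * ln w.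
Proof.
  intros Hs Hy Hw Hw1; unfold log_quotient.
  rewrite <- pow2_abs, ln_pow by (apply Rabs_pos_lt, Hy); simpl INR.
  assert (ln w <= ln (phi t)) by (apply ln_le_compat; lra).
  assert (ln w <= 0) by (rewrite <- ln_1; apply ln_le_compat; lra).
  nra.
Qed.

Lemma log_quotient_unbounded_at_zero s (y phi : R -> R) p x0 :
  0 < s < 1 -> p < x0 -> continuity_pt y p -> continuity_pt phi p -> y p = 0 -> 0 < phi p ->
  (forall t, p < t <= x0 -> y t <> 0) -> unbounded_below_on (log_quotient s y phi) p x0.
Proof.
  intros Hs Hpx Hy Hphi Hyp Hphip Hnz N.
  set (w := Rmin 1 (phi p / 2)).
  assert (Hw : 0 < w) by (apply Rmin_pos; lra).
  assert (w <= 1) by apply Rmin_l; assert (w <= phi p / 2) by apply Rmin_r.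
  destruct (continuity_pt_ball phi p (phi p / 2) Hphi) as [d1 [Hd1 Hball1]]; [lra|].
  destruct (continuity_pt_ball y p (exp (N + 2 * ln w)) Hy) as [d2 [Hd2 Hball2]]; [apply exp_pos|].
  destruct (exists_pos_below d1 d2 (x0 - p) 1) as [r [Hr [Hr1 [Hr2 [Hr3 _]]]]]; try lra.
  assert (Hdist : Rabs (p + r - p) < Rmin d1 d2).
  { replace (p + r - p) with r by ring; rewrite Rabs_right by lra; apply Rmin_glb_lt; lra. }
  pose proof (Rmin_l d1 d2); pose proof (Rmin_r d1 d2).
  specialize (Hball1 (p + r) ltac:(lra)); specialize (Hball2 (p + r) ltac:(lra)).
  rewrite Hyp, Rminus_0_r in Hball2.
  assert (Hyr : y (p + r) <> 0) by (apply Hnz; lra).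
  exists (p + r); split; [lra|].
  eapply Rle_lt_trans; [apply log_quotient_le with (w := w); auto|].
  - apply Rabs_def2 in Hball1; lra.
  - assert (ln (Rabs (y (p + r))) < N + 2 * ln w); [|lra].
    rewrite <- (ln_exp (N + 2 * ln w)); apply ln_increasing; [apply Rabs_pos_lt|]; assumption.
Qed.

Lemma log_quotient_unbounded_at_cubic_zero s (y phi : R -> R) a x0 A k del :
  0 < s < 1 -> a < x0 -> 0 < A -> 0 < k -> 0 < del ->
  (forall t, a < t < x0 -> Rabs (y t) <= A * (t - a) ^ 3 /\ y t <> 0) ->
  (forall t, a < t < a + del -> k * (t - a) <= phi t) ->
  unbounded_below_on (log_quotient s y phi) a x0.
Proof.
  intros Hs Hax HA Hk Hdel Hy Hphi N.
  destruct (exists_pos_below del (x0 - a) (/ k) (exp (N - ln A + 2 * ln k)))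
    as [r [Hr [Hr1 [Hr2 [Hr3 Hr4]]]]]; try lra; try apply Rinv_0_lt_compat; try apply exp_pos; auto.
  assert (Hkr : k * r <= 1).
  { apply Rmult_lt_compat_l with (r := k) in Hr3; [|lra]; rewrite Rinv_r in Hr3; lra. }
  destruct (Hy (a + r) ltac:(lra)) as [Hcubic Hyr].
  replace (a + r - a) with r in Hcubic by ring.
  exists (a + r); split; [lra|].
  eapply Rle_lt_trans; [apply log_quotient_le with (w := k * r); auto|].
  - split; [nra|]; replace (k * r) with (k * (a + r - a)) by ring; apply Hphi; lra.
  - assert (ln (Rabs (y (a + r))) <= ln A + 3 * ln r).
    { eapply Rle_trans; [apply ln_le_compat; [apply Rabs_pos_lt, Hyr | exact Hcubic]|].
      rewrite ln_mult, ln_pow by (try apply pow_lt; lra); simpl INR; lra. }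
    assert (ln r < N - ln A + 2 * ln k).
    { rewrite <- (ln_exp (N - ln A + 2 * ln k)); apply ln_increasing; lra. }
    rewrite ln_mult by lra; lra.
Qed.

Lemma riccati_completing_square s t h :
  0 < s < 1 -> - (t - 2 * s * h) ^ 2 / (4 * s * (1 - s)) <= 2 * h * t - t ^ 2.
Proof.
  intro Hs; assert (Heps : 0 < 4 * s * (1 - s)) by nra.
  assert (Hsq : 2 * h * t - t ^ 2 + (t - 2 * s * h) ^ 2 / (4 * s * (1 - s))
                = ((1 - 2 * s) * t + 2 * s * h) ^ 2 / (4 * s * (1 - s))) by (field; lra).
  assert (0 <= ((1 - 2 * s) * t + 2 * s * h) ^ 2 / (4 * s * (1 - s)))
    by (apply Rmult_le_pos; [apply pow2_ge_0 | left; apply Rinv_0_lt_compat, Heps]).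
  unfold Rdiv in *; lra.
Qed.

Lemma log_quotient_riccati s mu M (y yd ydd phi L1 L2 : R -> R) x :
  0 < s < 1 -> y x <> 0 ->
  derivable_pt_lim y x (yd x) -> derivable_pt_lim yd x (ydd x) ->
  ydd x = 2 * L1 x * yd x - mu * y x ->
  derivable_pt_lim (fun t => ln (phi t)) x (L1 x) -> derivable_pt_lim L1 x (L2 x) -> L2 x <= M ->
  derivable_pt_lim (log_quotient s y phi) x (yd x / y x - 2 * s * L1 x) /\
  derivable_pt_lim (fun t => yd t / y t - 2 * s * L1 t) x
    ((ydd x * y x - yd x ^ 2) / y x ^ 2 - 2 * s * L2 x) /\
  (- 2 * s * M - mu) - (yd x / y x - 2 * s * L1 x) ^ 2 / (4 * s * (1 - s))
    <= (ydd x * y x - yd x ^ 2) / y x ^ 2 - 2 * s * L2 x.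
Proof.
  intros Hs Hy Hyd Hydd Hode Hln HL1 HM.
  assert (Hy2 : 0 < y x ^ 2) by (pose proof (pow2_ge_0 (y x)); destruct (Rlt_or_le 0 (y x)); nra).
  split; [|split].
  - apply (derivable_pt_lim_ext (fun t => / 2 * ln (y t ^ 2) - 2 * s * ln (phi t)));
      [intro t; unfold log_quotient; field|].
    replace (yd x / y x) with (/ 2 * (/ (y x ^ 2) * (2 * y x * yd x))) by (field; exact Hy).
    apply (derivable_pt_lim_minus (fun t => / 2 * ln (y t ^ 2)) (fun t => 2 * s * ln (phi t)));
      apply derivable_pt_lim_scal; [|exact Hln].
    apply (derivable_pt_lim_comp (fun t => y t ^ 2) ln); [|apply derivable_pt_lim_ln, Hy2].
    apply (derivable_pt_lim_ext (fun t => y t * y t)); [intro; ring|].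
    replace (2 * y x * yd x) with (yd x * y x + y x * yd x) by ring.
    apply derivable_pt_lim_mult; exact Hyd.
  - replace ((ydd x * y x - yd x ^ 2) / y x ^ 2) with ((ydd x * y x - yd x * yd x) / Rsqr (y x))
      by (unfold Rsqr; field; exact Hy).
    apply (derivable_pt_lim_minus (fun t => yd t / y t) (fun t => 2 * s * L1 t));
      [apply (derivable_pt_lim_div yd y); assumption | apply derivable_pt_lim_scal, HL1].
  - replace ((ydd x * y x - yd x ^ 2) / y x ^ 2)
      with (2 * L1 x * (yd x / y x) - (yd x / y x) ^ 2 - mu) by (rewrite Hode; field; exact Hy).
    pose proof (riccati_completing_square s (yd x / y x) (L1 x) Hs); nra.
Qed.

Lemma log_deriv_eq (f f' L : R -> R) x :
  0 < f x -> derivable_pt_lim f x (f' x) -> derivable_pt_lim (fun t => ln (f t)) x (L x) ->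
  L x = f' x / f x.
Proof.
  intros Hf Hf' HL; apply (uniqueness_limite _ x _ _ HL).
  replace (f' x / f x) with (/ f x * f' x) by (field; lra).
  apply (derivable_pt_lim_comp f ln); [exact Hf' | apply derivable_pt_lim_ln, Hf].
Qed.

(** * Dirichlet eigenfunctions near the boundary *)

Definition wronskian (f f' g g' : R -> R) (t : R) : R := f t * g' t - f' t * g t.

Lemma wronskian_deriv (V f f' f'' g g' g'' : R -> R) lam mu x :
  derivable_pt_lim f x (f' x) -> derivable_pt_lim f' x (f'' x) -> - f'' x + V x * f x = lam * f x ->
  derivable_pt_lim g x (g' x) -> derivable_pt_lim g' x (g'' x) -> - g'' x + V x * g x = mu * g x ->
  derivable_pt_lim (wronskian f f' g g') x ((lam - mu) * (f x * g x)).
Proof.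
  intros Hf Hf' Hfeq Hg Hg' Hgeq.
  replace ((lam - mu) * (f x * g x))
    with (f' x * g' x + f x * g'' x - (f'' x * g x + f' x * g' x)) by nra.
  apply (derivable_pt_lim_minus (fun t => f t * g' t) (fun t => f' t * g t));
    apply derivable_pt_lim_mult; assumption.
Qed.

Lemma wronskian_reflect f f' g g' t :
  wronskian (fun x => f (- x)) (fun x => - f' (- x)) (fun x => g (- x)) (fun x => - g' (- x)) t
  = - wronskian f f' g g' (- t).
Proof. unfold wronskian; ring. Qed.

Lemma Dirichlet_eigenfunction_reflect d V lam f f' f'' :
  Dirichlet_eigenfunction d V lam f f' f'' ->
  Dirichlet_eigenfunction d (fun x => V (- x)) lam
    (fun x => f (- x)) (fun x => - f' (- x)) (fun x => f'' (- x)).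
Proof.
  unfold Dirichlet_eigenfunction, in_open, in_closed.
  intros [Heq [Hlim [Hleft [Hright [x0 [Hx0 Hfx0]]]]]]; split; [|split; [|split; [|split]]].
  - intros x Hx; destruct (Heq (- x) ltac:(lra)) as [Hf [Hf' Hfeq]]; split; [|split].
    + apply derivable_pt_lim_reflect, Hf.
    + rewrite <- (Ropp_involutive (f'' (- x))).
      apply derivable_pt_lim_opp with (f := fun t => f' (- t)), derivable_pt_lim_reflect, Hf'.
    + exact Hfeq.
  - intros x Hx e He; destruct (Hlim (- x) ltac:(lra) e He) as [del [Hdel Hf]].
    exists del; split; [exact Hdel|]; intros z [Hz Hzx]; apply (Hf (- z)); split; [lra|].
    simpl in *; unfold R_dist in *; replace (- z - - x) with (- (z - x)) by ring.
    rewrite Rabs_Ropp; exact Hzx.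
  - rewrite Ropp_involutive; exact Hright.
  - exact Hleft.
  - exists (- x0); split; [lra | rewrite Ropp_involutive; exact Hfx0].
Qed.

Lemma eigenfunction_energy_comparable d V lam f f' f'' BV :
  0 < d -> (forall x, in_open d x -> Rabs (V x) <= BV) ->
  (forall x, in_open d x -> derivable_pt_lim f x (f' x) /\
     derivable_pt_lim f' x (f'' x) /\ - f'' x + V x * f x = lam * f x) ->
  exists K, 0 < K /\ forall x y, in_open d x -> in_open d y ->
    f x ^ 2 + f' x ^ 2 <= (f y ^ 2 + f' y ^ 2) * K.
Proof.
  intros Hd HV Hf; set (C := BV + Rabs lam).
  assert (HC : 0 <= C).
  { pose proof (HV 0 ltac:(unfold in_open; lra)); pose proof (Rabs_pos (V 0)).
    pose proof (Rabs_pos lam); unfold C; lra. }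
  exists (exp ((1 + C) * (d / 2 - - (d / 2)))); split; [apply exp_pos|]; intros x y Hx Hy.
  apply (comparable_of_log_deriv_bound (fun t => f t ^ 2 + f' t ^ 2)
    (fun t => 2 * f t * f' t + 2 * f' t * f'' t)); [lra | | exact Hx | exact Hy].
  intros t Ht; destruct (Hf t Ht) as [Hf1 [Hf2 Heq]]; split; [|split]; [| |nra].
  - apply (derivable_pt_lim_ext (fun t => f t * f t + f' t * f' t)); [intro; ring|].
    replace (2 * f t * f' t + 2 * f' t * f'' t)
      with (f' t * f t + f t * f' t + (f'' t * f' t + f' t * f'' t)) by ring.
    apply derivable_pt_lim_plus; apply derivable_pt_lim_mult; assumption.
  - assert (Hf'' : Rabs (f'' t) <= C * Rabs (f t)).
    { replace (f'' t) with ((V t - lam) * f t) by lra; rewrite Rabs_mult.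
      apply Rmult_le_compat_r; [apply Rabs_pos|]; unfold Rminus.
      eapply Rle_trans; [apply Rabs_triang|]; rewrite Rabs_Ropp.
      pose proof (HV t Ht); unfold C; lra. }
    assert (Hamgm : 2 * Rabs (f t) * Rabs (f' t) <= f t ^ 2 + f' t ^ 2).
    { rewrite <- (pow2_abs (f t)), <- (pow2_abs (f' t)).
      pose proof (pow2_ge_0 (Rabs (f t) - Rabs (f' t))); nra. }
    eapply Rle_trans; [apply Rabs_triang|]; rewrite !Rabs_mult, Rabs_right by lra.
    pose proof (Rabs_pos (f t)); pose proof (Rabs_pos (f' t)).
    pose proof (Rmult_le_compat_l (Rabs (f' t)) _ _ (Rabs_pos _) Hf''); nra.
Qed.

Lemma vanishes_at_right_of_boundary_limit f d :
  0 < d -> limit1_in f (in_closed d) (f (- (d / 2))) (- (d / 2)) -> f (- (d / 2)) = 0 ->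
  vanishes_at_right f (- (d / 2)).
Proof.
  intros Hd Hlim Hzero e He; destruct (Hlim e He) as [del [Hdel Hf]].
  exists (Rmin del d); split; [apply Rmin_pos; lra|]; intros x Hx.
  pose proof (Rmin_l del d); pose proof (Rmin_r del d).
  specialize (Hf x); simpl in Hf; unfold R_dist in Hf; rewrite Hzero, Rminus_0_r in Hf.
  apply Hf; split; [unfold in_closed; lra | rewrite Rabs_right; lra].
Qed.

Lemma eigenfunction_linear_bound_at_left d V lam f f' f'' BV :
  0 < d -> (forall x, in_open d x -> Rabs (V x) <= BV) ->
  Dirichlet_eigenfunction d V lam f f' f'' ->
  exists B, 0 <= B /\ forall x, in_open d x ->
    Rabs (f' x) <= B /\ Rabs (f x) <= B * (x - - (d / 2)).
Proof.
  intros Hd HV [Heq [Hlim [Hleft _]]].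
  destruct (eigenfunction_energy_comparable d V lam f f' f'' BV Hd HV Heq) as [K [HK HE]].
  set (B := (f 0 ^ 2 + f' 0 ^ 2) * K + 1).
  assert (Hf' : forall x, in_open d x -> Rabs (f' x) <= B).
  { intros x Hx; apply abs_le_of_sq_le.
    pose proof (HE x 0 Hx ltac:(unfold in_open; lra)); pose proof (pow2_ge_0 (f x)); lra. }
  exists B; split.
  { pose proof (Hf' 0 ltac:(unfold in_open; lra)); pose proof (Rabs_pos (f' 0)); lra. }
  intros x Hx; split; [exact (Hf' x Hx)|].
  apply (abs_le_of_vanishes_at_right f f' (fun _ => B) (- (d / 2)) (d / 2)); [| | |exact Hx].
  - apply vanishes_at_right_of_boundary_limit; auto; apply Hlim; unfold in_closed; lra.
  - intros t Ht; apply Heq, Ht.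
  - intros z t Hz Ht; apply Hf'; unfold in_open; lra.
Qed.

Section LeftEndpoint.
Variables (d BV lam1 lam2 : R) (V phi phi' phi'' u u' u'' : R -> R).
Hypothesis Hd : 0 < d.
Hypothesis HV : forall x, in_open d x -> Rabs (V x) <= BV.
Hypothesis Hphi : Dirichlet_eigenfunction d V lam1 phi phi' phi''.
Hypothesis Hphi_pos : forall x, in_open d x -> 0 < phi x.
Hypothesis Hu : Dirichlet_eigenfunction d V lam2 u u' u''.

Lemma wronskian_cubic_at_left :
  exists A, 0 < A /\ forall x, in_open d x ->
    Rabs (wronskian phi phi' u u' x) <= A * (x - - (d / 2)) ^ 3.
Proof.
  destruct (eigenfunction_linear_bound_at_left d V lam1 phi phi' phi'' BV Hd HV Hphi)
    as [Bp [HBp Hbp]].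
  destruct (eigenfunction_linear_bound_at_left d V lam2 u u' u'' BV Hd HV Hu) as [Bu [HBu Hbu]].
  set (A := Rabs (lam1 - lam2) * Bp * Bu + 1).
  assert (HA0 : 0 <= Rabs (lam1 - lam2) * Bp * Bu)
    by (apply Rmult_le_pos; [apply Rmult_le_pos; [apply Rabs_pos|] |]; lra).
  exists A; split; [unfold A; lra|]; intros x Hx.
  replace (A * (x - - (d / 2)) ^ 3) with (A * (x - - (d / 2)) ^ 2 * (x - - (d / 2))) by ring.
  apply (abs_le_of_vanishes_at_right _ (fun t => (lam1 - lam2) * (phi t * u t))
    (fun t => A * (t - - (d / 2)) ^ 2) (- (d / 2)) (d / 2)); [| | |exact Hx].
  - apply (vanishes_at_right_of_linear_bound _ _ (d / 2) (2 * Bp * Bu)); [lra|]; intros t Ht.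
    destruct (Hbp t Ht) as [Hp' Hp]; destruct (Hbu t Ht) as [Hu' Hu0].
    unfold wronskian; eapply Rle_trans; [apply Rabs_triang|].
    rewrite Rabs_Ropp, !Rabs_mult.
    pose proof (Rmult_le_compat _ _ _ _ (Rabs_pos (phi t)) (Rabs_pos (u' t)) Hp Hu').
    pose proof (Rmult_le_compat _ _ _ _ (Rabs_pos (phi' t)) (Rabs_pos (u t)) Hp' Hu0).
    nra.
  - intros t Ht; destruct Hphi as [Hpe _]; destruct Hu as [Hue _].
    destruct (Hpe t Ht) as [Hp1 [Hp2 Hp3]]; destruct (Hue t Ht) as [Hu1 [Hu2 Hu3]].
    exact (wronskian_deriv V phi phi' phi'' u u' u'' lam1 lam2 t Hp1 Hp2 Hp3 Hu1 Hu2 Hu3).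
  - intros z t Hz Ht.
    destruct (Hbp z ltac:(unfold in_open; lra)) as [_ Hp].
    destruct (Hbu z ltac:(unfold in_open; lra)) as [_ Hu0].
    rewrite !Rabs_mult.
    pose proof (Rmult_le_compat _ _ _ _ (Rabs_pos (phi z)) (Rabs_pos (u z)) Hp Hu0).
    assert (Hzt : (z - - (d / 2)) ^ 2 <= (t - - (d / 2)) ^ 2) by (apply pow_incr; lra).
    pose proof (Rabs_pos (lam1 - lam2)).
    assert (Rabs (lam1 - lam2) * (Rabs (phi z) * Rabs (u z))
      <= Rabs (lam1 - lam2) * (Bp * Bu * (z - - (d / 2)) ^ 2)) by (apply Rmult_le_compat_l; nra).
    unfold A; nra.
Qed.

Lemma eigenfunction_linear_lower_bound_at_left :
  exists del k, 0 < del /\ 0 < k /\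
    forall x, - (d / 2) < x < - (d / 2) + del -> k * (x - - (d / 2)) <= phi x.
Proof.
  destruct (eigenfunction_linear_bound_at_left d V lam1 phi phi' phi'' BV Hd HV Hphi)
    as [B [HB Hb]].
  destruct Hphi as [Heq _].
  destruct (eigenfunction_energy_comparable d V lam1 phi phi' phi'' BV Hd HV Heq) as [K [HK HE]].
  assert (H0 : in_open d 0) by (unfold in_open; lra).
  assert (HE0 : 0 < phi 0 ^ 2 + phi' 0 ^ 2) by (pose proof (Hphi_pos 0 H0); nra).
  destruct (linear_lower_bound_at_left phi phi' (- (d / 2)) (d / 2) B
    ((phi 0 ^ 2 + phi' 0 ^ 2) / K))
    as [del [k [Hdel [Hk Hlow]]]]; [lra | apply Rdiv_lt_0_compat; lra | | | |].
  - intros x Hx; destruct (Heq x Hx) as [Hp1 [Hp2 _]].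
    split; [exact Hp1 | exact (derivable_pt_lim_continuity_pt _ _ _ Hp2)].
  - intros x Hx; split; [apply Hphi_pos, Hx|].
    destruct (Hb x Hx) as [_ Hbx]; eapply Rle_trans; [apply Rle_abs | exact Hbx].
  - intros x Hx; apply Rmult_le_reg_r with K; [exact HK|].
    unfold Rdiv; rewrite Rmult_assoc, Rinv_l, Rmult_1_r by lra; apply HE; [exact H0 | exact Hx].
  - exists del, k; split; [exact Hdel|]; split; [exact Hk|]; intros x Hx; apply Hlow, Hx.
Qed.

Lemma log_quotient_wronskian_unbounded_at_left s p x0 :
  0 < s < 1 -> - (d / 2) <= p < x0 -> x0 < d / 2 ->
  (p = - (d / 2) \/ wronskian phi phi' u u' p = 0) ->
  (forall t, p < t <= x0 -> wronskian phi phi' u u' t <> 0) ->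
  unbounded_below_on (log_quotient s (wronskian phi phi' u u') phi) p x0.
Proof.
  intros Hs Hp Hx0 Hpz Hnz.
  destruct (Req_dec p (- (d / 2))) as [->|Hpa].
  - destruct wronskian_cubic_at_left as [A [HA Hcubic]].
    destruct eigenfunction_linear_lower_bound_at_left as [del [k [Hdel [Hk Hlow]]]].
    apply (log_quotient_unbounded_at_cubic_zero s _ phi _ x0 A k del); auto; [lra|].
    intros t Ht; split; [apply Hcubic; unfold in_open; lra | apply Hnz; lra].
  - destruct Hpz as [|Hpz]; [contradiction|].
    assert (Hin : in_open d p) by (unfold in_open; lra).
    destruct Hphi as [Hpe _]; destruct Hu as [Hue _].
    destruct (Hpe p Hin) as [Hp1 [Hp2 Hp3]]; destruct (Hue p Hin) as [Hu1 [Hu2 Hu3]].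
    apply log_quotient_unbounded_at_zero; auto; [lra | |].
    + exact (derivable_pt_lim_continuity_pt _ _ _
        (wronskian_deriv V phi phi' phi'' u u' u'' lam1 lam2 p Hp1 Hp2 Hp3 Hu1 Hu2 Hu3)).
    + exact (derivable_pt_lim_continuity_pt _ _ _ Hp1).
Qed.

End LeftEndpoint.

Lemma log_quotient_wronskian_unbounded_at_right d BV lam1 lam2 V phi phi' phi'' u u' u'' s x0 q :
  0 < d -> (forall x, in_open d x -> Rabs (V x) <= BV) ->
  Dirichlet_eigenfunction d V lam1 phi phi' phi'' -> (forall x, in_open d x -> 0 < phi x) ->
  Dirichlet_eigenfunction d V lam2 u u' u'' -> 0 < s < 1 ->
  - (d / 2) < x0 < q -> q <= d / 2 ->
  (q = d / 2 \/ wronskian phi phi' u u' q = 0) ->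
  (forall t, x0 <= t < q -> wronskian phi phi' u u' t <> 0) ->
  unbounded_below_on (log_quotient s (wronskian phi phi' u u') phi) x0 q.
Proof.
  (* x |-> - x maps the problem to one with potential V (- x), whose left end is our right end *)
  intros Hd HV Hphi Hpos Hu Hs Hx0 Hq Hqz Hnz.
  apply unbounded_below_on_reflect.
  apply (unbounded_below_on_ext (log_quotient s
    (wronskian (fun x => phi (- x)) (fun x => - phi' (- x))
       (fun x => u (- x)) (fun x => - u' (- x)))
    (fun x => phi (- x)))).
  { intro t; unfold log_quotient; rewrite wronskian_reflect; f_equal; f_equal; f_equal; ring. }
  apply (log_quotient_wronskian_unbounded_at_left d BV lam1 lam2 (fun x => V (- x)) _ _
    (fun x => phi'' (- x)) _ _ (fun x => u'' (- x)));
    try apply Dirichlet_eigenfunction_reflect; auto; try lra.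
  - intros x Hx; apply HV; unfold in_open in *; lra.
  - intros x Hx; apply Hpos; unfold in_open in *; lra.
  - rewrite wronskian_reflect, Ropp_involutive.
    destruct Hqz as [-> | Hqz]; [left; ring | right; rewrite Hqz; ring].
  - intros t Ht; rewrite wronskian_reflect; apply Ropp_neq_0_compat, Hnz; lra.
Qed.

Lemma eigenfunction_log_second_deriv d V lam phi phi' phi'' L1 L2 x :
  Dirichlet_eigenfunction d V lam phi phi' phi'' -> (forall x, in_open d x -> 0 < phi x) ->
  (forall x, in_open d x ->
     derivable_pt_lim (fun t => ln (phi t)) x (L1 x) /\ derivable_pt_lim L1 x (L2 x)) ->
  in_open d x -> L2 x = V x - lam - (phi' x / phi x) ^ 2.
Proof.
  intros [Heq _] Hpos HL Hx; apply (uniqueness_limite L1 x _ _ (proj2 (HL x Hx))).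
  destruct (Heq x Hx) as [Hp1 [Hp2 Hp3]]; pose proof (Hpos x Hx).
  apply (derivable_pt_lim_locally_ext (fun t => phi' t / phi t) L1 x (- (d / 2)) (d / 2));
    [exact Hx | intros z Hz; symmetry; apply log_deriv_eq; try apply Heq; try apply HL; auto |].
  replace (V x - lam - (phi' x / phi x) ^ 2)
    with ((phi'' x * phi x - phi' x * phi' x) / Rsqr (phi x))
    by (unfold Rsqr; replace (phi'' x) with ((V x - lam) * phi x) by lra; field; lra).
  apply (derivable_pt_lim_div phi' phi); [exact Hp2 | exact Hp1 | lra].
Qed.

(** * The eigenvalue gap *)

Lemma continuous_bounded_on_open d V :
  0 < d -> (forall x, in_closed d x -> continuity_pt V x) ->
  exists BV, forall x, in_open d x -> Rabs (V x) <= BV.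
Proof.
  intros Hd HVc.
  destruct (continuity_ab_maj (fun x => Rabs (V x)) (- (d / 2)) (d / 2)) as [xm [HVm _]]; [lra| |].
  { intros c Hc; apply (continuity_pt_comp V Rabs); [apply HVc, Hc | apply Rcontinuity_abs]. }
  exists (Rabs (V xm)); intros x Hx; apply HVm; unfold in_open in Hx; lra.
Qed.

Lemma wronskian_not_identically_zero d V lam1 lam2 phi phi' phi'' u u' u'' :
  Dirichlet_eigenfunction d V lam1 phi phi' phi'' -> (forall x, in_open d x -> 0 < phi x) ->
  Dirichlet_eigenfunction d V lam2 u u' u'' -> lam1 <> lam2 ->
  exists x0, in_open d x0 /\ wronskian phi phi' u u' x0 <> 0.
Proof.
  intros [Hpe _] Hpos [Hue [_ [_ [_ [xs [Hxs Huxs]]]]]] Hne.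
  destruct (Hpe xs Hxs) as [Hp1 [Hp2 Hp3]]; destruct (Hue xs Hxs) as [Hu1 [Hu2 Hu3]].
  apply (exists_nonzero_of_deriv_nonzero _ _ xs _ _ Hxs
    (wronskian_deriv V phi phi' phi'' u u' u'' lam1 lam2 xs Hp1 Hp2 Hp3 Hu1 Hu2 Hu3)).
  pose proof (Hpos xs Hxs); intro Hz.
  apply Rmult_integral in Hz as [Hz|Hz]; [lra|]; apply Rmult_integral in Hz as [Hz|Hz]; lra.
Qed.

Lemma eigenvalue_gap_lower_bound d V lam1 lam2 phi phi' phi'' u u' u'' L1 L2 s M :
  0 < d -> (forall x, in_closed d x -> continuity_pt V x) ->
  Dirichlet_eigenfunction d V lam1 phi phi' phi'' -> (forall x, in_open d x -> 0 < phi x) ->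
  Dirichlet_eigenfunction d V lam2 u u' u'' -> lam1 <> lam2 ->
  (forall x, in_open d x ->
     derivable_pt_lim (fun t => ln (phi t)) x (L1 x) /\ derivable_pt_lim L1 x (L2 x)) ->
  (forall x, in_open d x -> L2 x <= M) -> 0 < s < 1 ->
  4 * s * (1 - s) * (PI / d) ^ 2 - 2 * s * M <= lam2 - lam1.
Proof.
  intros Hd HVc Hphi Hpos Hu Hne HL HM Hs.
  destruct (continuous_bounded_on_open d V Hd HVc) as [BV HV].
  set (y := wronskian phi phi' u u').
  set (yd := fun t => (lam1 - lam2) * (phi t * u t)).
  set (ydd := fun t => (lam1 - lam2) * (phi' t * u t + phi t * u' t)).
  assert (Hy : forall x, in_open d x ->
    derivable_pt_lim y x (yd x) /\ derivable_pt_lim yd x (ydd x) /\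
    ydd x = 2 * L1 x * yd x - (lam2 - lam1) * y x).
  { intros x Hx; destruct (proj1 Hphi x Hx) as [Hp1 [Hp2 Hp3]].
    destruct (proj1 Hu x Hx) as [Hu1 [Hu2 Hu3]].
    split; [|split].
    - exact (wronskian_deriv V phi phi' phi'' u u' u'' lam1 lam2 x Hp1 Hp2 Hp3 Hu1 Hu2 Hu3).
    - apply derivable_pt_lim_scal, derivable_pt_lim_mult; assumption.
    - rewrite (log_deriv_eq phi phi' L1 x (Hpos x Hx) Hp1 (proj1 (HL x Hx))).
      pose proof (Hpos x Hx); unfold y, yd, ydd, wronskian; field; lra. }
  destruct (wronskian_not_identically_zero d V lam1 lam2 phi phi' phi'' u u' u'' Hphi Hpos Hu Hne)
    as [x0 [Hx0 Hyx0]].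
  destruct (nonvanishing_interval y (- (d / 2)) (d / 2) x0 Hx0)
    as [p [q [Hp [Hq [Hpz [Hqz Hnz]]]]]];
    [intros t Ht; exact (derivable_pt_lim_continuity_pt _ _ _ (proj1 (Hy t Ht))) | exact Hyx0 |].
  assert (Hgap : 4 * s * (1 - s) * (PI / (q - p)) ^ 2 <= - (- 2 * s * M - (lam2 - lam1))).
  { apply (riccati_bound (log_quotient s y phi) (fun t => yd t / y t - 2 * s * L1 t)
      (fun t => (ydd t * y t - yd t ^ 2) / y t ^ 2 - 2 * s * L2 t) p x0 q); [nra | lra | | |].
    - intros x Hx; assert (Hxin : in_open d x) by (unfold in_open; lra).
      destruct (Hy x Hxin) as [Hy1 [Hy2 Hy3]]; destruct (HL x Hxin) as [HL1 HL2].
      apply log_quotient_riccati; auto.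
    - apply (log_quotient_wronskian_unbounded_at_left d BV lam1 lam2 V phi phi' phi''
        u u' u''); auto; try lra; intros t Ht; apply Hnz; lra.
    - apply (log_quotient_wronskian_unbounded_at_right d BV lam1 lam2 V phi phi' phi''
        u u' u''); auto; try lra; intros t Ht; apply Hnz; lra. }
  assert (Hlen : (PI / d) ^ 2 <= (PI / (q - p)) ^ 2).
  { pose proof PI_RGT_0; apply pow_incr; split; [apply Rlt_le, Rdiv_lt_0_compat; lra|].
    apply Rmult_le_compat_l; [lra | apply Rinv_le_contravar; lra]. }
  assert (4 * s * (1 - s) * (PI / d) ^ 2 <= 4 * s * (1 - s) * (PI / (q - p)) ^ 2)
    by (apply Rmult_le_compat_l; [nra | exact Hlen]).
  lra.
Qed.

Theorem mainTheorem5 (d : R) (V V' : R -> R) (lam1 lam2 : R)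
    (phi phi' phi'' L1 L2 : R -> R) :
  0 < d ->
  (forall x, derivable_pt_lim V x (V' x)) -> continuity V' ->
  (forall x, in_closed d x -> V (- x) = V x) ->
  Dirichlet_eigenvalue d V lam1 ->
  (forall mu, Dirichlet_eigenvalue d V mu -> lam1 <= mu) ->
  Dirichlet_eigenvalue d V lam2 -> lam1 < lam2 ->
  (forall mu, Dirichlet_eigenvalue d V mu -> lam1 < mu -> lam2 <= mu) ->
  Dirichlet_eigenfunction d V lam1 phi phi' phi'' ->
  (forall x, in_open d x -> 0 < phi x) ->
  (forall x, in_open d x ->
     derivable_pt_lim (fun t => ln (phi t)) x (L1 x) /\
     derivable_pt_lim L1 x (L2 x)) ->
  forall s, 0 < s < 1 ->
  (forall M, is_lub (fun y => exists t, in_open d t /\ y = L2 t) M ->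
     lam2 - lam1 >= 4 * s * (1 - s) * (PI ^ 2 / d ^ 2) + 2 * s * (- M)) /\
  (forall m, is_glb (fun y => exists t, in_open d t /\
                          y = (phi' t / phi t) ^ 2 - V t) m ->
     lam2 >= (1 + 2 * s) * lam1 + 4 * s * (1 - s) * (PI ^ 2 / d ^ 2) + 2 * s * m).
Proof.
  intros Hd HV _ _ _ _ [u [u' [u'' Hu]]] Hlt _ Hphi Hpos HL s Hs.
  assert (HVc : forall x, in_closed d x -> continuity_pt V x)
    by (intros x _; exact (derivable_pt_lim_continuity_pt _ _ _ (HV x))).
  assert (Hpi : PI ^ 2 / d ^ 2 = (PI / d) ^ 2) by (field; lra).
  rewrite Hpi; split.
  - intros M [HM _].
    assert (Hgap := eigenvalue_gap_lower_bound d V lam1 lam2 phi phi' phi'' u u' u'' L1 L2 s M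
      Hd HVc Hphi Hpos Hu ltac:(lra) HL ltac:(intros t Ht; apply HM; exists t; auto) Hs).
    lra.
  - intros m [Hm _].
    assert (HL2 : forall t, in_open d t -> L2 t <= - lam1 - m).
    { intros t Ht.
      rewrite (eigenfunction_log_second_deriv d V lam1 phi phi' phi'' L1 L2 t Hphi Hpos HL Ht).
      enough (m <= (phi' t / phi t) ^ 2 - V t) by lra.
      apply Hm; exists t; auto. }
    assert (Hgap := eigenvalue_gap_lower_bound d V lam1 lam2 phi phi' phi'' u u' u'' L1 L2 s
      (- lam1 - m) Hd HVc Hphi Hpos Hu ltac:(lra) HL HL2 Hs).
    lra.
Qed.
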